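(* Let $R \to S$ be a ring homomorphism with the stable prime extension property. (a) If $R$ and $S$ are quasilocal with maximal ideals $\mathfrak{m}$ and $\mathfrak{n}$ and $R \to S$ is a local homomorphism, then the kernel of $R \to S$ is contained in the nilradical of $R$; in particular, if $R$ is reduced then $R \to S$ is injective. (b) For every prime ideal $P$ of $R$, either $PS = S$ or the contraction of $PS$ to $R$ equals $P$.
   Context: All rings are commutative with identity. A ring homomorphism $R \to S$ has the prime extension property if for every prime ideal $P$ of $R$, $PS$ is prime in $S$ or $PS = S$; it has the stable prime extension property if for every $n \ge 0$, $R[X_1,\dots,X_n] \to S[X_1,\dots,X_n]$ has the prime extension property. A quasilocal ring is a ring with a unique maximal ideal (not necessarily Noetherian). *)

From HB Require Import structures.
From mathcomp Require Import all_boot all_order all_algebra.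
Set Implicit Arguments. Unset Strict Implicit. Unset Printing Implicit Defensive.
Import GRing.Theory.
Local Open Scope ring_scope.

Definition is_ideal (R : comNzRingType) (I : R -> Prop) : Prop :=
  I 0 /\ (forall x y, I x -> I y -> I (x + y)) /\ (forall r x, I x -> I (r * x)).

Definition is_prime_ideal (R : comNzRingType) (I : R -> Prop) : Prop :=
  is_ideal I /\ ~ I 1 /\ (forall a b, I (a * b) -> I a \/ I b).

Definition is_maximal_ideal (R : comNzRingType) (I : R -> Prop) : Prop :=
  is_ideal I /\ ~ I 1 /\
  (forall J : R -> Prop, is_ideal J -> (forall x, I x -> J x) ->
     (forall x, J x <-> I x) \/ (forall x, J x)).

Definition quasilocal_with (R : comNzRingType) (m : R -> Prop) : Prop :=
  is_maximal_ideal m /\ (forall M, is_maximal_ideal M -> forall x, M x <-> m x).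

Definition ext_ideal (A B : comNzRingType) (g : A -> B) (I : A -> Prop) : B -> Prop :=
  fun y => exists (k : nat) (s : 'I_k -> B) (p : 'I_k -> A),
    (forall i, I (p i)) /\ y = \sum_(i < k) s i * g (p i).

Definition prime_ext_prop (A B : comNzRingType) (g : A -> B) : Prop :=
  forall P : A -> Prop, is_prime_ideal P ->
    is_prime_ideal (ext_ideal g P) \/ (forall y, ext_ideal g P y).

(* R[X_1, ..., X_n] as the iterated univariate polynomial ring. *)
Fixpoint polyn (R : comNzRingType) (n : nat) : comNzRingType :=
  match n with
  | 0 => R
  | n'.+1 => ({poly polyn R n'} : comNzRingType)
  end.

Fixpoint polyn_map (R S : comNzRingType) (f : R -> S) (n : nat)
  : polyn R n -> polyn S n :=
  match n return polyn R n -> polyn S n with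
  | 0 => f
  | n'.+1 => map_poly (@polyn_map R S f n')
  end.

Definition stable_prime_ext_prop (R S : comNzRingType) (f : R -> S) : Prop :=
  forall n : nat, prime_ext_prop (@polyn_map R S f n).

(* Part (b): let PS be prime and suppose f x lies in PS although x is not in P.
   In R[Y][X], the contraction Q of the prime P[T] under Y |-> x T^2, X |-> x T is
   prime and contains P and X^2 - x Y, so X^2 lies in the extension QS; QS being
   prime (it cannot be everything, see below) it contains X.  But since x is not
   in P, the coefficients of X^0 Y^0 and X^1 Y^0 of elements of Q lie in P, so
   those of elements of QS lie in PS, which fails for X.
   Part (a): a non-nilpotent x in the kernel avoids some prime P; P lies in the
   maximal ideal, so PS lies in the proper ideal n and by (b) x is in P. *)

From HB Require Import structures.
From mathcomp Require Import all_boot all_order all_algebra zify ring.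
From mathcomp Require classical_sets.
From Stdlib Require Import Classical.
Import GRing.Theory.
Set Implicit Arguments. Unset Strict Implicit.
Local Open Scope ring_scope.

Section Ideals.
Variable R : comNzRingType.
Implicit Types (I : R -> Prop) (c x y : R).

Lemma ideal_sum I k (F : 'I_k -> R) :
  is_ideal I -> (forall i, I (F i)) -> I (\sum_(i < k) F i).
Proof. by move=> [I0 [ID _]] IF; apply: (big_ind I). Qed.

Lemma ideal_sub I x y : is_ideal I -> I x -> I y -> I (x - y).
Proof. by move=> [_ [ID IM]] Ix Iy; apply: ID => //; rewrite -mulN1r; apply: IM. Qed.

Lemma is_ideal_add_principal I c :
  is_ideal I -> is_ideal (fun y => exists d r, I d /\ y = d + r * c).
Proof.
move=> [I0 [ID IM]]; split; [|split].
- by exists 0, 0; rewrite mul0r addr0.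
- move=> _ _ [d1 [r1 [Id1 ->]]] [d2 [r2 [Id2 ->]]]; exists (d1 + d2), (r1 + r2).
  by split; [apply: ID | rewrite mulrDl addrACA].
- move=> r _ [d [s [Id ->]]]; exists (r * d), (r * s).
  by split; [apply: IM | rewrite mulrDr mulrA].
Qed.

End Ideals.

Lemma is_ideal_preim (A B : comNzRingType) (g : {rmorphism A -> B}) (J : B -> Prop) :
  is_ideal J -> is_ideal (fun a => J (g a)).
Proof.
move=> [J0 [JD JM]]; split; [|split].
- by rewrite rmorph0.
- by move=> a b Ja Jb; rewrite rmorphD; apply: JD.
- by move=> r a Ja; rewrite rmorphM; apply: JM.
Qed.

Lemma is_prime_ideal_preim (A B : comNzRingType) (g : {rmorphism A -> B}) (J : B -> Prop) :
  is_prime_ideal J -> is_prime_ideal (fun a => J (g a)).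
Proof.
move=> [hJ [J1 Jp]]; split; first exact: is_ideal_preim.
by split; [rewrite rmorph1 | move=> a b; rewrite rmorphM; apply: Jp].
Qed.

Section Extension.
Variables (A B : comNzRingType) (g : A -> B) (I : A -> Prop).

Lemma ext_ideal_min (J : B -> Prop) y :
  is_ideal J -> (forall q, I q -> J (g q)) -> ext_ideal g I y -> J y.
Proof.
move=> hJ IJ [k [s [p [Ip ->]]]]; apply: ideal_sum => // i.
by case: hJ => [_ [_ JM]]; apply/JM/IJ.
Qed.

Lemma ext_ideal_image q : I q -> ext_ideal g I (g q).
Proof.
by move=> Iq; exists 1%N, (fun _ => 1), (fun _ => q); rewrite big_ord1 mul1r.
Qed.

End Extension.

(* Substitution of x T^2 for the inner variable Y and of x T for X. *)
Definition evalT (R : comNzRingType) (x : R) : {rmorphism {poly {poly R}} -> {poly R}} :=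
  horner_eval (x%:P * 'X) \o map_poly (comp_poly (x%:P * 'X^2)).

Section EvalT.
Variables (R : comNzRingType) (x : R).

Lemma evalTX : evalT x 'X = x%:P * 'X.
Proof. by rewrite /= map_polyX horner_evalE hornerX. Qed.

Lemma evalTC c : evalT x c%:P = c \Po (x%:P * 'X^2).
Proof. by rewrite /= map_polyC horner_evalE hornerC. Qed.

Lemma coef_comp_poly_mulX2 (c : {poly R}) :
  (c \Po (x%:P * 'X^2))`_0 = c`_0 /\ (c \Po (x%:P * 'X^2))`_1 = 0.
Proof.
elim/poly_ind: c => [|c a _]; first by rewrite comp_poly0 !coef0.
by rewrite comp_poly_MXaddC mulrA !coefD !coefMXn /= coefMX !coefC !add0r.
Qed.

Lemma coef_evalT h :
  (evalT x h)`_0 = h`_0`_0 /\ (evalT x h)`_1 = x * h`_1`_0.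
Proof.
elim/poly_ind: h => [|h c [IH0 _]]; first by rewrite rmorph0 !coef0 mulr0.
have [c0 c1] := coef_comp_poly_mulX2 c.
rewrite rmorphD rmorphM evalTX evalTC !coefD mulrA c0 c1 !coefMX /= coef0M IH0.
by rewrite coef0 !coefC /= !addr0 mulrC.
Qed.

Lemma evalT_XX : evalT x ('X * 'X - (x%:P * 'X)%:P) = 0.
Proof.
rewrite rmorphB rmorphM evalTX evalTC comp_polyM comp_polyX comp_polyC.
apply/eqP; rewrite subr_eq0; apply/eqP; ring.
Qed.

End EvalT.

Section CoefIdeal.
Variables (R : comNzRingType) (P : R -> Prop).

Definition coefs_in (p : {poly R}) := forall i, P p`_i.

Lemma coefs_in_polyC p : P 0 -> P p -> coefs_in p%:P.
Proof. by move=> P0 Pp i; rewrite coefC; case: eqP. Qed.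

Lemma is_ideal_coefs_in : is_ideal P -> is_ideal coefs_in.
Proof.
move=> hP; case: (hP) => [P0 [PD PM]]; split; [|split].
- by move=> i; rewrite coef0.
- by move=> a b Pa Pb i; rewrite coefD; apply: PD.
- by move=> r a Pa i; rewrite coefM; apply: ideal_sum => // j; apply: PM.
Qed.

Lemma coefs_in_mul_drop_const (a b : {poly R}) : is_ideal P ->
  P a`_0 -> coefs_in (a * b) -> coefs_in (drop_poly 1 a * b).
Proof.
move=> hP Pa0 Pab i; have [_ [_ PM]] := hP.
have ea : a = (a`_0)%:P + drop_poly 1 a * 'X.
  apply/polyP => -[|j]; rewrite coefD coefC coefMX /=; first by rewrite addr0.
  by rewrite add0r coef_drop_poly addn1.
have := Pab i.+1; rewrite {1}ea mulrDl mulrAC coefD coefCM coefMX /= => Pi.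
rewrite -(addKr (a`_0 * b`_i.+1) (drop_poly 1 a * b)`_i) addrC.
by apply: ideal_sub => //; rewrite mulrC; apply: PM.
Qed.

Lemma is_prime_coefs_in : is_prime_ideal P -> is_prime_ideal coefs_in.
Proof.
move=> [hP [P1 Pp]]; have [P0 _] := hP.
split; first exact: is_ideal_coefs_in.
split; first by move=> /(_ 0%N); rewrite coef1.
suff coefs_in_prime_le n (a b : {poly R}) : (size a + size b <= n)%N ->
    coefs_in (a * b) -> coefs_in a \/ coefs_in b by move=> a b; apply: coefs_in_prime_le.
elim: n a b => [|n IH] a b.
  rewrite leqn0 addn_eq0 size_poly_eq0 => /andP[/eqP -> _] _.
  by left=> i; rewrite coef0.
wlog Pa0 : a b / P a`_0.
  move=> wlog_Pa0 le_ab Pab; case: (classic (P a`_0)) => [Pa0|nPa0]; first exact: wlog_Pa0.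
  case: (classic (P b`_0)) => [Pb0|nPb0]; last by have := Pab 0%N; rewrite coef0M => /Pp[].
  rewrite addnC mulrC in le_ab Pab.
  by case: (wlog_Pa0 b a Pb0 le_ab Pab); [right|left].
move=> le_ab Pab; have [->|a_neq0] := eqVneq a 0; first by left=> i; rewrite coef0.
have le_a'b : (size (drop_poly 1 a) + size b <= n)%N.
  by move: le_ab a_neq0; rewrite size_drop_poly -size_poly_eq0; lia.
case: (IH _ _ le_a'b (coefs_in_mul_drop_const hP Pa0 Pab)) => [Pa'|]; last by right.
by left=> -[|i] //; have := Pa' i; rewrite coef_drop_poly addn1.
Qed.

End CoefIdeal.

Lemma is_ideal_low_coefs (S : comNzRingType) (I : S -> Prop) : is_ideal I ->
  is_ideal (fun h : {poly {poly S}} => I h`_0`_0 /\ I h`_1`_0).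
Proof.
move=> [I0 [ID IM]]; split; [|split].
- by rewrite !coef0.
- by move=> a b [a0 a1] [b0 b1]; rewrite !coefD; split; apply: ID.
- move=> r a [a0 a1]; rewrite !coef0M; split; first exact: IM.
  rewrite coefM !big_ord_recr big_ord0 /= add0r subn0 subnn coefD !coef0M.
  by apply: ID; apply: IM.
Qed.

Section MaximalIdeals.
Variable R : comNzRingType.
Implicit Types (I M : R -> Prop).

Lemma exists_ideal_maximal_avoiding I M :
  is_ideal I -> (forall y, I y -> ~ M y) ->
  exists A : R -> Prop, [/\ is_ideal A, (forall y, I y -> A y),
    (forall y, A y -> ~ M y) &
    forall J, is_ideal J -> (forall y, A y -> J y) -> (forall y, J y -> ~ M y) ->
      forall y, J y -> A y].
Proof.
move=> hI IM.
pose admissible A := [/\ is_ideal A, forall y, I y -> A y & forall y, A y -> ~ M y].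
(* Empty sets are admitted so that the union of the empty chain qualifies. *)
have [A [gA maxA]] : exists A, ((exists y, A y) -> admissible A) /\
    forall B, classical_sets.proper A B -> ~ ((exists y, B y) -> admissible B).
  apply: classical_sets.Zorn_bigcup => F FP Ftot [y0 [X0 FX0 X0y0]].
  have admissible_mem X y : F X -> X y -> admissible X.
    by move=> FX Xy; apply: FP FX _; exists y.
  have [[X00 _] IX0 _] := admissible_mem _ _ FX0 X0y0.
  split; [split; [|split]| |].
  - by exists X0.
  - move=> x y [X FX Xx] [Y FY Yy].
    have [[_ [XD _]] _ _] := admissible_mem _ _ FX Xx.
    have [[_ [YD _]] _ _] := admissible_mem _ _ FY Yy.
    by case: (Ftot X Y FX FY) => [XY|YX]; [exists Y => //; apply: YD (XY _ Xx) Yy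
      | exists X => //; apply: XD Xx (YX _ Yy)].
  - move=> r x [X FX Xx]; exists X => //.
    by have [[_ [_ XM]] _ _] := admissible_mem _ _ FX Xx; apply: XM.
  - by move=> y Iy; exists X0 => //; apply: IX0.
  - by move=> y [X FX Xy]; have [_ _ XM] := admissible_mem _ _ FX Xy; apply: XM.
have [y Ay] : exists y, A y.
  apply: NNPP => A_empty; apply: (maxA I) => [|_]; last by split=> // y /IM.
  split=> [y Ay|I_le_A]; first by exfalso; apply: A_empty; exists y.
  by apply: A_empty; exists 0; apply: I_le_A; case: hI.
have [hA IA AM] := gA (ex_intro _ y Ay).
exists A; split=> // J hJ AJ JM z Jz; apply: NNPP => nAz.
apply: (maxA J); first by split=> // JA; apply/nAz/JA.
by split=> // w /IA /AJ.
Qed.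

Lemma exists_maximal_ideal_ge I :
  is_ideal I -> ~ I 1 -> exists M, is_maximal_ideal M /\ forall y, I y -> M y.
Proof.
move=> hI nI1; have [|A [hA IA A1 maxA]] := @exists_ideal_maximal_avoiding I (eq^~ 1) hI.
  by move=> y Iy y1; apply: nI1; rewrite -y1.
exists A; split=> //; split=> //; split=> [/A1 //|J hJ AJ].
case: (classic (J 1)) => [J1|nJ1].
  by right=> y; rewrite -[y]mulr1; case: hJ => [_ [_ JM]]; apply: JM.
left=> y; split; last exact: AJ.
by apply: maxA => // z Jz z1; apply: nJ1; rewrite -z1.
Qed.

Lemma quasilocal_ideal_le m I :
  quasilocal_with m -> is_ideal I -> ~ I 1 -> forall y, I y -> m y.
Proof.
move=> [_ m_uniq] hI nI1 y Iy; have [M [hM IM]] := exists_maximal_ideal_ge hI nI1.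
by apply/(m_uniq M hM)/IM.
Qed.

Lemma exists_prime_ideal_notin (x : R) :
  (forall k, x ^+ k <> 0) -> exists P, is_prime_ideal P /\ ~ P x.
Proof.
move=> x_nnil; pose pow y := exists k, y = x ^+ k.
have zero_ideal : is_ideal (eq^~ 0 : R -> Prop).
  by split=> //; split=> [_ _ -> ->|r _ ->]; rewrite (addr0, mulr0).
have [|A [hA _ A_pow maxA]] := exists_ideal_maximal_avoiding (M := pow) zero_ideal.
  by move=> _ -> [k /esym]; apply: x_nnil.
have [A0 [AD AM]] := hA.
have meets_pow c : ~ A c -> exists k d r, A d /\ x ^+ k = d + r * c.
  move=> nAc; apply: NNPP => no_pow; apply/nAc/(maxA _ (is_ideal_add_principal c hA)).
  - by move=> y Ay; exists y, 0; rewrite mul0r addr0.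
  - by move=> _ [d [r [Ad ->]]] [k ek]; apply: no_pow; exists k, d, r.
  - by exists 0, 1; rewrite add0r mul1r.
exists A; split; last by move=> /A_pow; apply; exists 1%N; rewrite expr1.
split=> //; split=> [/A_pow[]|a b Aab]; first by exists 0%N.
apply: NNPP => /not_or_and [/meets_pow [i [d1 [r1 [Ad1 e1]]]]].
move=> /meets_pow [j [d2 [r2 [Ad2 e2]]]].
apply: (A_pow (x ^+ (i + j))); last by exists (i + j)%N.
have -> : x ^+ (i + j) = (d2 + r2 * b) * d1 + (r1 * a) * d2 + (r1 * r2) * (a * b).
  by rewrite exprD e1 e2; ring.
by apply: AD (AD _ _ (AM _ _ Ad1) (AM _ _ Ad2)) (AM _ _ Aab).
Qed.

End MaximalIdeals.

Section Contraction.
Variables (R S : comNzRingType) (f : {rmorphism R -> S}) (P : R -> Prop).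
Hypotheses (P_prime : is_prime_ideal P) (PS_prime : is_prime_ideal (ext_ideal f P)).

Lemma ext_prime_contracted :
  prime_ext_prop (map_poly (map_poly f)) -> forall x, ext_ideal f P (f x) -> P x.
Proof.
move=> f2_ext x PSfx; apply: NNPP => nPx.
have [[P0 _] [_ Pp]] := P_prime; have [hPS [nPS1 _]] := PS_prime.
set PS := ext_ideal f P in hPS nPS1 PSfx.
pose f2 : {rmorphism {poly {poly R}} -> {poly {poly S}}} := map_poly (map_poly f).
pose Q h := coefs_in P (evalT x h).
have hQ : is_prime_ideal Q := is_prime_ideal_preim (evalT x) (is_prime_coefs_in P_prime).
pose J (h : {poly {poly S}}) := PS h`_0`_0 /\ PS h`_1`_0.
have hJ : is_ideal J := is_ideal_low_coefs hPS.
have QJ q : Q q -> J (f2 q).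
  have [evalT0 evalT1] := coef_evalT x q.
  move=> Qq; rewrite /J !coef_map_id0 ?rmorph0 //; split; apply: ext_ideal_image.
    by have := Qq 0%N; rewrite evalT0.
  by have := Qq 1%N; rewrite evalT1 => /Pp[].
have nJX : ~ J 'X by rewrite /J !coefX /= coef0 coef1 => -[].
have [[hQS [_ QSp]] | QS_all] := f2_ext Q hQ.
  2: exact/nJX/(ext_ideal_min hJ QJ (QS_all 'X)).
set QS := ext_ideal f2 Q in hQS QSp.
have QS_fxY : QS ((f x)%:P * 'X)%:P.
  pose C : {rmorphism S -> {poly {poly S}}} := polyC \o polyC.
  have QS_Cfx : QS (C (f x)).
    apply: (ext_ideal_min (is_ideal_preim C hQS) _ PSfx) => p Pp'.
    have -> : C (f p) = f2 ((p%:P)%:P) by rewrite /C /f2 /= map_polyC /= map_polyC.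
    by apply: ext_ideal_image; rewrite /Q evalTC comp_polyC; apply: coefs_in_polyC.
  have [_ [_ QSM]] := hQS.
  by rewrite polyCM mulrC; apply: QSM.
have QS_XX : QS ('X * 'X).
  have -> : 'X * 'X = f2 ('X * 'X - (x%:P * 'X)%:P) + ((f x)%:P * 'X)%:P.
    rewrite rmorphB rmorphM /= map_polyX !map_polyC /=.
    by rewrite rmorphM /= map_polyX map_polyC subrK.
  have [_ [QSD _]] := hQS; apply: QSD => //.
  by apply: ext_ideal_image; rewrite /Q evalT_XX => i; rewrite coef0.
by case: (QSp _ _ QS_XX) => /(ext_ideal_min hJ QJ).
Qed.

End Contraction.

Lemma stable_prime_ext_contraction (R S : comNzRingType) (f : {rmorphism R -> S}) :
  stable_prime_ext_prop f -> forall P, is_prime_ideal P ->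
  (forall y, ext_ideal f P y) \/ (forall x, ext_ideal f P (f x) <-> P x).
Proof.
move=> hf P hP; case: (hf 0%N P hP) => [PS_prime|]; [right | by left].
move=> x; split; last exact: ext_ideal_image.
exact: (ext_prime_contracted hP PS_prime (hf 2%N)).
Qed.

Lemma local_ker_nilpotent (R S : comNzRingType) (f : {rmorphism R -> S})
    (m : R -> Prop) (n : S -> Prop) :
  quasilocal_with m -> quasilocal_with n -> (forall x, m x -> n (f x)) ->
  (forall P, is_prime_ideal P ->
    (forall y, ext_ideal f P y) \/ (forall x, ext_ideal f P (f x) <-> P x)) ->
  forall x, f x = 0 -> exists k, x ^+ k = 0.
Proof.
move=> hm [[hn [n1 _]] _] f_local contracted x fx0; apply: NNPP => x_nnil.
have [P [hP nPx]] : exists P, is_prime_ideal P /\ ~ P x.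
  by apply: exists_prime_ideal_notin => k xk0; apply: x_nnil; exists k.
have [hPi [P1 _]] := hP.
case: (contracted P hP) => [PS_all | PS_contr].
- apply/n1/(ext_ideal_min hn _ (PS_all 1)) => p Pp.
  exact/f_local/(quasilocal_ideal_le hm hPi P1 Pp).
- by apply/nPx/PS_contr; rewrite fx0 -(rmorph0 f); apply: ext_ideal_image; case: hPi.
Qed.

Theorem proposition3p3 (R S : comNzRingType) (f : {rmorphism R -> S})
  (hf : stable_prime_ext_prop f) :
  (* (a) *)
  (forall (m : R -> Prop) (n : S -> Prop),
     quasilocal_with m -> quasilocal_with n ->
     (forall x, m x -> n (f x)) ->
     (forall x, f x = 0 -> exists k : nat, x ^+ k = 0) /\
     ((forall (x : R) (k : nat), x ^+ k = 0 -> x = 0) -> injective f)) /\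
  (* (b) *)
  (forall P : R -> Prop, is_prime_ideal P ->
     (forall y, ext_ideal f P y) \/ (forall x, ext_ideal f P (f x) <-> P x)).
Proof.
have contracted := stable_prime_ext_contraction hf.
split=> // m n hm hn f_local.
have ker_nil := local_ker_nilpotent hm hn f_local contracted.
split=> // reduced a b fab.
have [k abk] : exists k, (a - b) ^+ k = 0 by apply: ker_nil; rewrite rmorphB fab subrr.
by apply/eqP; rewrite -subr_eq0 (reduced _ _ abk).
Qed.
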